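(* Let $n\ge3$ be an odd integer. For $1\le r\le n-1$ let $S^r_n=\{(k,a,b)\in(\mathbb{R}\setminus A_n)\times\mathbb{R}\times\mathbb{R}: k\neq0,\ \mathrm{rank}(A^{(k,a,b)}_n)\le r,\ 4a^3+27b^2=0\}\setminus\{(k,0,0):k\in\mathbb{R}\}$. Then (a) $S^{n-1}_n=\{(k,a^{(n)}_{k,1},b^{(n)}_{k,1}): k\in\mathbb{R}\setminus A_n\}$; (b) the matrix $A^{(k,a,b)}_n$ has rank exactly $n-1$ for all but finitely many triples $(k,a,b)\in S^{n-1}_n$; (c) for each $1\le r\le n-2$, the matrix $A^{(k,a,b)}_n$ has rank $r$ for only finitely many triples $(k,a,b)\in S^{n-1}_n$.
   Context: For real $k,a,b$, the generalized $k$-FL sequence is $S^{(a,b)}_{k,0}=2b$, $S^{(a,b)}_{k,1}=bk+a$, $S^{(a,b)}_{k,m}=kS^{(a,b)}_{k,m-1}+S^{(a,b)}_{k,m-2}$. $A^{(k,a,b)}_n$ is the $n\times n$ skew circulant matrix whose $(i,j)$ entry is $S^{(a,b)}_{k,j-i+1}$ if $j\ge i$ and $-S^{(a,b)}_{k,n+j-i+1}$ if $j<i$. Define $f_m,g_m\in\mathbb{Z}[T]$ by $f_0=0,f_1=1,g_0=2,g_1=T$, $f_m=Tf_{m-1}+f_{m-2}$, $g_m=Tg_{m-1}+g_{m-2}$; $F_n=f_{n+1}-f_n$, $G_n=g_{n+1}-g_n$; $A_n=\{k\in\mathbb{R}: F_n(k)+1=0\text{ or }G_n(k)+k-2=0\}$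 (for odd $n$, $0\in A_n$). For $k\notin A_n$, the singular $k$-FL pair of level $n$ of Type 1 is $a^{(n)}_{k,1}=-\frac{27(F_n(k)+1)^2}{4(G_n(k)+k-2)^2}$, $b^{(n)}_{k,1}=\frac{27(F_n(k)+1)^3}{4(G_n(k)+k-2)^3}$. The condition $4a^3+27b^2=0$ means the curve $y^2=x^3+ax+b$ is singular. *)

From HB Require Import structures.
From mathcomp Require Import all_boot all_order all_algebra.
From mathcomp Require Import reals.
Set Implicit Arguments. Unset Strict Implicit. Unset Printing Implicit Defensive.
Import Order.TTheory GRing.Theory Num.Theory.
Local Open Scope ring_scope.

Fixpoint FLpair {R : ringType} (k a b : R) (m : nat) : R * R :=
  match m with
  | 0 => (2 * b, b * k + a)
  | m'.+1 => let p := FLpair k a b m' in (p.2, k * p.2 + p.1)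
  end.
Definition FLseq {R : ringType} (k a b : R) (m : nat) : R := (FLpair k a b m).1.

(* the n x n skew circulant matrix A_n^{(k,a,b)} (0-based indices; j-i+1 unchanged) *)
Definition FLmx {R : ringType} (n : nat) (k a b : R) : 'M[R]_n :=
  \matrix_(i < n, j < n)
    (if (i <= j)%N then FLseq k a b (j - i).+1
     else - FLseq k a b (n + j - i).+1).

Fixpoint fgpair (m : nat) : ({poly int} * {poly int}) * ({poly int} * {poly int}) :=
  (* ((f_m, f_{m+1}), (g_m, g_{m+1})) *)
  match m with
  | 0 => ((0, 1), (2%:P, 'X))
  | m'.+1 => let p := fgpair m' in
      ((p.1.2, 'X * p.1.2 + p.1.1), (p.2.2, 'X * p.2.2 + p.2.1))
  end.
Definition fpoly (m : nat) : {poly int} := (fgpair m).1.1.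
Definition gpoly (m : nat) : {poly int} := (fgpair m).2.1.
Definition Fpoly (n : nat) : {poly int} := fpoly n.+1 - fpoly n.
Definition Gpoly (n : nat) : {poly int} := gpoly n.+1 - gpoly n.

Definition evalZ {R : ringType} (p : {poly int}) (x : R) : R :=
  (map_poly intr p).[x].

Definition inA {R : ringType} (n : nat) (k : R) : bool :=
  (evalZ (Fpoly n) k + 1 == 0) || (evalZ (Gpoly n) k + k - 2 == 0).

Definition aT1 {R : fieldType} (n : nat) (k : R) : R :=
  - (27 * (evalZ (Fpoly n) k + 1) ^+ 2) / (4 * (evalZ (Gpoly n) k + k - 2) ^+ 2).
Definition bT1 {R : fieldType} (n : nat) (k : R) : R :=
  (27 * (evalZ (Fpoly n) k + 1) ^+ 3) / (4 * (evalZ (Gpoly n) k + k - 2) ^+ 3).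

Definition inS {R : fieldType} (n r : nat) (k a b : R) : Prop :=
  [/\ ~~ inA n k, k != 0, (\rank (FLmx n k a b) <= r)%N,
      4 * a ^+ 3 + 27 * b ^+ 2 = 0 & ~ (a = 0 /\ b = 0)].

(* The skew circulant A = A_n^{(k,a,b)} commutes with the negacyclic shift J
   (J^n = -1), and the recurrence of the S_m telescopes into
     A (1 - k J - J^2) = c + d J,   c = S_1 + S_{n+1},  d = S_0 + S_n.
   For odd n the only real eigenvalue of J is -1, with the alternating vector as
   eigenvector.  Hence A is singular iff c = d, i.e. iff
   a (F_n(k) + 1) + b (G_n(k) + k - 2) = 0, and the nonzero singular pair on this
   line is the Type 1 pair.  If rank A <= n - 2, the kernel of c (1 + J) has
   dimension at least 2, so c = d = 0; as a linear system in (a, b) this has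
   determinant 2 g_n(k), so k is one of the finitely many roots of g_n. *)

From HB Require Import structures.
From mathcomp Require Import all_boot all_order all_algebra.
From mathcomp Require Import reals.
From mathcomp Require Import zify ring lra.
From Stdlib Require Import Classical_Prop.
Set Implicit Arguments. Unset Strict Implicit. Unset Printing Implicit Defensive.
Import Order.TTheory GRing.Theory Num.Theory.
Local Open Scope ring_scope.

Section SkewCirculant.
Context {R : nzRingType} (p : nat).
Implicit Types (t : nat -> R).

Definition skew_circulant t : 'M[R]_p.+1 :=
  \matrix_(i, j) if (i <= j)%N then t (j - i)%N else - t (p.+1 + j - i)%N.

Definition skew_shift : 'M[R]_p.+1 :=
  \matrix_(i, j) if j == i.+1 :> nat then 1
                 else if (i == p :> nat) && (j == 0 :> nat) then -1 else 0.

Definition negacyclic_shift t m : R := if m is m'.+1 then t m' else - t p.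

Lemma mulmx_skew_shiftE m (X : 'M[R]_(m, p.+1)) i (j : 'I_p.+1) :
  (X *m skew_shift) i j = if j == 0 :> nat then - X i ord_max else X i (inord j.-1).
Proof.
rewrite mxE; case: ifP => j0.
  rewrite (bigD1 ord_max) //= big1 ?addr0; first by rewrite mxE (eqP j0) /= eqxx mulrN1.
  move=> l /eqP lmax; rewrite mxE (eqP j0) /=.
  have -> : (l == p :> nat) = false by apply/eqP => lp; apply: lmax; apply: val_inj.
  by rewrite mulr0.
have j1 : (j.-1 < p.+1)%N by have := ltn_ord j; lia.
rewrite (bigD1 (inord j.-1)) //= big1 ?addr0.
  by rewrite mxE inordK // prednK ?lt0n ?j0 // eqxx mulr1.
move=> l /eqP lj; rewrite mxE j0 andbF.
have -> : (j == l.+1 :> nat) = false.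
  by apply/eqP => jl; apply: lj; apply: val_inj; rewrite /= inordK // jl.
by rewrite mulr0.
Qed.

Lemma skew_shift_mulmxE m (X : 'M[R]_(p.+1, m)) (i : 'I_p.+1) j :
  (skew_shift *m X) i j = if i == p :> nat then - X ord0 j else X (inord i.+1) j.
Proof.
rewrite mxE; case: ifP => ip.
  rewrite (bigD1 ord0) //= big1 ?addr0; first by rewrite mxE /= ip mulN1r.
  move=> l /eqP l0; rewrite mxE ip /=.
  have -> : (l == i.+1 :> nat) = false by rewrite (eqP ip); have := ltn_ord l; lia.
  have -> : (l == 0 :> nat) = false by apply/eqP => l0'; apply: l0; apply: val_inj.
  by rewrite mul0r.
have i1 : (i.+1 < p.+1)%N by have := ltn_ord i; move/negbT: ip; lia.
rewrite (bigD1 (inord i.+1)) //= big1 ?addr0; first by rewrite mxE inordK // eqxx mul1r.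
move=> l /eqP li; rewrite mxE ip.
have -> : (l == i.+1 :> nat) = false.
  by apply/eqP => li'; apply: li; apply: val_inj; rewrite /= inordK // li'.
by rewrite mul0r.
Qed.

Lemma skew_circulant_mulmx_shift t :
  skew_circulant t *m skew_shift = skew_circulant (negacyclic_shift t).
Proof.
apply/matrixP => i j; rewrite mulmx_skew_shiftE !mxE.
have := ltn_ord i; case: j => [[|j] ltjp] /=; rewrite ?inordK /=; try lia;
  case: (nat_of_ord i) => [|i'] ltip /=; rewrite ?leqnn ?subn0 //=.
- rewrite ifT; last lia.
  by have -> : (p.+1 + 0 - i'.+1 = (p - i'.+1).+1)%N by lia.
- case: (ltngtP i' j) => ij /=.
  + rewrite ifT; last lia.
    by have -> : (j.+1 - i'.+1 = (j - i'.+1).+1)%N by lia.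
  + rewrite ifF; last lia.
    by have -> : (p.+1 + j.+1 - i'.+1 = (p.+1 + j - i'.+1).+1)%N by lia.
  + by rewrite ij leqnn subnn addSnnS addnK.
Qed.

Lemma skew_shift_mulmx_circulant t :
  skew_shift *m skew_circulant t = skew_circulant (negacyclic_shift t).
Proof.
apply/matrixP => i j; rewrite skew_shift_mulmxE !mxE.
have := ltn_ord j; case: (eqVneq (nat_of_ord i) p) => [-> | /eqP ip] ltjp /=.
  rewrite subn0; case: (ltngtP j p) => jp; try lia; last by rewrite jp subnn.
  by have -> : (p.+1 + j - p = j.+1)%N by lia.
have ltip : (i.+1 < p.+1)%N by have := ltn_ord i; lia.
rewrite inordK //; case: (ltngtP i j) => ij.
- by have -> : (j - i = (j - i.+1).+1)%N by lia.
- by have -> : (p.+1 + j - i = (p.+1 + j - i.+1).+1)%N by lia.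
- by rewrite ij subnn addSnnS addnK.
Qed.

Lemma eq_skew_circulant t1 t2 :
  (forall m, (m <= p)%N -> t1 m = t2 m) -> skew_circulant t1 = skew_circulant t2.
Proof.
move=> t12; apply/matrixP => i j; have := ltn_ord i; have := ltn_ord j.
by rewrite !mxE; case: ifP => ij ltj lti; rewrite t12 //; lia.
Qed.

Lemma skew_circulantD t1 t2 :
  skew_circulant t1 + skew_circulant t2 = skew_circulant (fun m => t1 m + t2 m).
Proof. by apply/matrixP => i j; rewrite !mxE; case: ifP; rewrite ?opprD. Qed.

Lemma skew_circulantN t : - skew_circulant t = skew_circulant (fun m => - t m).
Proof. by apply/matrixP => i j; rewrite !mxE; case: ifP. Qed.

Lemma skew_circulantZ c t : c *: skew_circulant t = skew_circulant (fun m => c * t m).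
Proof. by apply/matrixP => i j; rewrite !mxE; case: ifP; rewrite ?mulrN. Qed.

Lemma skew_circulant1 : skew_circulant (fun m => (m == 0)%:R) = 1%:M.
Proof.
apply/matrixP => i j; rewrite !mxE -val_eqE /=; have := ltn_ord i.
case: (ltngtP i j) => ij lti; last by rewrite ij subnn.
  by rewrite subn_eq0 leqNgt ij.
by rewrite (_ : (p.+1 + j - i == 0)%N = false) ?oppr0 //; lia.
Qed.

Lemma skew_shift_exp m :
  (m <= p)%N -> skew_shift ^+ m = skew_circulant (fun l => (l == m)%:R).
Proof.
elim: m => [_|m IHm ltmp]; first by rewrite expr0 skew_circulant1.
rewrite exprSr -mulmxE IHm 1?ltnW // skew_circulant_mulmx_shift.
by apply: eq_skew_circulant => -[|l] _ //=; rewrite gtn_eqF ?oppr0.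
Qed.

Lemma skew_shift_exp_order : skew_shift ^+ p.+1 = -1.
Proof.
rewrite exprSr -mulmxE skew_shift_exp // skew_circulant_mulmx_shift -idmxE -skew_circulant1.
rewrite skew_circulantN; apply: eq_skew_circulant => -[|l] /= ltlp; first by rewrite eqxx.
by rewrite ltn_eqF ?oppr0.
Qed.

Lemma skew_shift_circulant :
  (0 < p)%N -> skew_shift = skew_circulant (fun m => (m == 1)%:R).
Proof. by move=> p0; rewrite -skew_shift_exp // expr1. Qed.

End SkewCirculant.

Section FLmatrix.
Variables (R : comNzRingType) (k a b : R).
Local Notation S := (FLseq k a b).

Lemma FLseqSS m : S m.+2 = k * S m.+1 + S m.
Proof. by []. Qed.

Lemma FLmx_skew_circulant p : FLmx p.+1 k a b = skew_circulant p (fun m => S m.+1).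
Proof. by apply/matrixP => i j; rewrite !mxE. Qed.

Lemma FLmx_skew_shiftC p :
  FLmx p.+1 k a b *m skew_shift p = skew_shift p *m FLmx p.+1 k a b.
Proof.
by rewrite FLmx_skew_circulant skew_circulant_mulmx_shift skew_shift_mulmx_circulant.
Qed.

Lemma FLmx_mul_shift_quadratic p : (0 < p)%N ->
  FLmx p.+1 k a b *m (1%:M - k *: skew_shift p - skew_shift p *m skew_shift p) =
  (S 1 + S p.+2)%:M + (S 0 + S p.+1) *: skew_shift p.
Proof.
move=> p0; rewrite !mulmxBr mulmx1 -scalemxAr mulmxA FLmx_skew_circulant.
rewrite !skew_circulant_mulmx_shift skew_circulantZ !skew_circulantN !skew_circulantD.
rewrite -scalemx1 -skew_circulant1 (skew_shift_circulant p0) !skew_circulantZ.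
rewrite skew_circulantD; apply: eq_skew_circulant.
case: p p0 => [//|p] _ [|[|m]] _ /=; rewrite ?mulr1n ?mulr0n.
- by rewrite (FLseqSS p.+1) (FLseqSS p); ring.
- by rewrite (FLseqSS 0); ring.
- by rewrite (FLseqSS m.+1) (FLseqSS m); ring.
Qed.

End FLmatrix.

Section SkewShiftKernel.
Context {R : fieldType} (p : nat).
Local Notation J := (skew_shift p : 'M[R]_p.+1).
Implicit Types (u : 'rV[R]_p.+1) (c d r : R).

Definition alt_row : 'rV[R]_p.+1 := \row_j (-1) ^+ j.

Lemma alt_row_neq0 : alt_row != 0.
Proof. by apply/negP => /eqP /rowP /(_ ord0) /eqP; rewrite !mxE expr0 oner_eq0. Qed.

Lemma alt_row_skew_shift : ~~ odd p -> alt_row *m J = - alt_row.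
Proof.
move=> evenp; apply/rowP => -[[|j] ltjp]; rewrite mulmx_skew_shiftE !mxE /=.
  by rewrite -signr_odd (negbTE evenp) expr0.
by rewrite inordK 1?ltnW // exprS mulN1r opprK.
Qed.

Lemma skew_shift_antifixed u : u *m J = - u -> (u <= alt_row)%MS.
Proof.
move=> uJ; apply/sub_rVP; exists (u 0 ord0); apply/rowP => j; rewrite !mxE mulrC.
case: j => j ltjp; elim: j ltjp => [|j IHj] ltjp.
  by rewrite expr0 mul1r; congr (u 0 _); apply: val_inj.
move/rowP/(_ (Ordinal ltjp)): uJ; rewrite mulmx_skew_shiftE !mxE /= => uJj.
rewrite -[LHS]opprK -uJj.
have -> : inord j = Ordinal (ltnW ltjp) by apply: val_inj; rewrite /= inordK 1?ltnW.
by rewrite IHj exprS mulN1r mulNr.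
Qed.

Lemma skew_shift_eigen_exp u r m : u *m J = r *: u -> u *m J ^+ m = r ^+ m *: u.
Proof.
move=> uJ; elim: m => [|m IHm]; first by rewrite expr0 scale1r mulmx1.
by rewrite exprSr -mulmxE mulmxA IHm -scalemxAl uJ scalerA -exprSr.
Qed.

Lemma ker_skew_shift_sum c u : c != 0 -> u *m (c%:M + c *: J) = 0 -> (u <= alt_row)%MS.
Proof.
move=> c0; rewrite mulmxDr mul_mx_scalar -scalemxAr -scalerDr => /eqP.
rewrite scaler_eq0 (negbTE c0) /= addrC addr_eq0 => /eqP.
exact: skew_shift_antifixed.
Qed.

End SkewShiftKernel.

Lemma odd_expr_eqN1 (R : realDomainType) (r : R) n : odd n -> r ^+ n = -1 -> r = -1.
Proof.
move=> oddn rn.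
have Nrn : (- r) ^+ n = 1 by rewrite exprNn -signr_odd oddn rn expr1 mulrNN mul1r.
have [Nr_lt0|Nr_ge0] := ltP (- r) 0.
  by move: (exprn_odd_lt0 (- r) oddn); rewrite Nrn Nr_lt0 ltr10.
move/eqP: Nrn; rewrite pexpr_eq1 ?odd_gt0 // => /eqP Nr1.
by rewrite -[r]opprK Nr1.
Qed.

Lemma skew_shift_real_eigen (R : realFieldType) p (u : 'rV[R]_p.+1) r :
  ~~ odd p -> u != 0 -> u *m skew_shift p = r *: u -> r = -1.
Proof.
move=> evenp u0 uJ; apply: (@odd_expr_eqN1 _ _ p.+1); first by rewrite /= evenp.
move: (skew_shift_eigen_exp p.+1 uJ); rewrite skew_shift_exp_order mulmxN mulmx1.
move/eqP; rewrite -scaleN1r -subr_eq0 -scalerBl scaler_eq0 (negbTE u0) orbF subr_eq0.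
by move/eqP.
Qed.

Lemma ker_skew_shift_comb (R : realFieldType) p (c d : R) (u : 'rV[R]_p.+1) :
  ~~ odd p -> c != d -> u *m (c%:M + d *: skew_shift p) = 0 -> u = 0.
Proof.
move=> evenp cd; rewrite mulmxDr mul_mx_scalar -scalemxAr => /eqP.
have [d0 | d0] := eqVneq d 0.
  by rewrite d0 scale0r addr0 scaler_eq0 -d0 (negbTE cd) => /eqP.
rewrite addr_eq0 => /eqP uJ; apply/eqP; apply: contraR cd => u0; apply/eqP.
have /(skew_shift_real_eigen evenp u0) : u *m skew_shift p = (- c / d) *: u.
  by apply: (scalerI d0); rewrite scalerA mulrCA divff // mulr1 scaleNr uJ opprK.
by move/eqP; rewrite mulNr eqr_opp -(divff d0) => /eqP /(mulIf (invr_neq0 d0)).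
Qed.

Lemma rank_le_pred_det (R : fieldType) p (A : 'M[R]_p.+1) :
  (\rank A <= p)%N = (\det A == 0).
Proof.
rewrite -[\det A == 0]negbK -unitfE -unitmxE -row_free_unit /row_free.
by have := rank_leq_row A; case: ltngtP; lia.
Qed.

Section FLmatrixRank.
Variables (R : fieldType) (k a b : R) (p : nat).
Hypothesis p_gt0 : (0 < p)%N.
Local Notation S := (FLseq k a b).
Local Notation A := (FLmx p.+1 k a b).
Local Notation J := (skew_shift p : 'M[R]_p.+1).
Local Notation v := (alt_row p : 'rV[R]_p.+1).

Lemma FLmx_det_eq0 : ~~ odd p -> k != 0 -> S 1 + S p.+2 = S 0 + S p.+1 -> \det A = 0.
Proof.
move=> evenp k0 cd; apply/eqP/det0P; exists v; first exact: alt_row_neq0.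
set w := v *m A.
have wJ : w *m J = - w.
  by rewrite -mulmxA FLmx_skew_shiftC mulmxA alt_row_skew_shift // mulNmx.
have : w *m (1%:M - k *: J - J *m J) = k *: w.
  rewrite !mulmxBr mulmx1 -scalemxAr mulmxA !wJ mulNmx wJ scalerN !opprK.
  by rewrite addrAC subrr add0r.
rewrite -mulmxA FLmx_mul_shift_quadratic // -cd mulmxDr mul_mx_scalar -scalemxAr.
rewrite alt_row_skew_shift // scalerN subrr => /esym /eqP.
by rewrite scaler_eq0 (negbTE k0) => /eqP.
Qed.

Lemma FLmx_rank_le_pred2 :
  S 1 + S p.+2 = S 0 + S p.+1 -> (\rank A <= p.-1)%N -> S 1 + S p.+2 = 0.
Proof.
move=> cd rankA; apply/eqP/negPn/negP => c0.
have AM := FLmx_mul_shift_quadratic k a b p_gt0; rewrite -cd in AM.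
set M := (1%:M - _ - _) in AM.
have rankAM : (\rank (A *m M) <= p.-1)%N by apply: leq_trans (mxrankM_maxl _ _) rankA.
have kerAM : (kermx (A *m M) <= v)%MS.
  apply/row_subP => i; apply: (ker_skew_shift_sum c0).
  by rewrite -AM -row_mul mulmx_ker row0.
have := mxrankS kerAM; rewrite mxrank_ker.
by have := rank_leq_row v; lia.
Qed.

End FLmatrixRank.

Lemma FLmx_rank_le_pred (R : realFieldType) (k a b : R) p :
  (0 < p)%N -> ~~ odd p -> k != 0 ->
  (\rank (FLmx p.+1 k a b) <= p)%N =
  (FLseq k a b 1 + FLseq k a b p.+2 == FLseq k a b 0 + FLseq k a b p.+1).
Proof.
move=> p0 evenp k0; rewrite rank_le_pred_det; apply/idP/eqP; last first.
  by move=> cd; apply/eqP; apply: FLmx_det_eq0.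
case/det0P => u u0 uA; apply/eqP; apply: contraR u0 => cd; apply/eqP.
apply: (ker_skew_shift_comb evenp cd).
by rewrite -FLmx_mul_shift_quadratic // mulmxA uA mul0mx.
Qed.

Section FLpolynomials.
Variable R : comNzRingType.
Implicit Types (x k a b : R) (q r : {poly int}).

Lemma evalZ_sub q r x : evalZ (q - r) x = evalZ q x - evalZ r x.
Proof. by rewrite /evalZ rmorphB /= hornerD hornerN. Qed.

Lemma evalZ_rec q r x : evalZ ('X * q + r) x = x * evalZ q x + evalZ r x.
Proof. by rewrite /evalZ rmorphD rmorphM /= map_polyX hornerD hornerM hornerX. Qed.

Lemma evalZ_fpoly0 x : evalZ (fpoly 0) x = 0.
Proof. by rewrite /evalZ /fpoly /= rmorph0 horner0. Qed.

Lemma evalZ_fpoly1 x : evalZ (fpoly 1) x = 1.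
Proof. by rewrite /evalZ /fpoly /= rmorph1 hornerC. Qed.

Lemma evalZ_gpoly0 x : evalZ (gpoly 0) x = 2.
Proof. by rewrite /evalZ /gpoly /= map_polyC hornerC. Qed.

Lemma evalZ_gpoly1 x : evalZ (gpoly 1) x = x.
Proof. by rewrite /evalZ /gpoly /= map_polyX hornerX. Qed.

Lemma evalZ_fpolySS x m :
  evalZ (fpoly m.+2) x = x * evalZ (fpoly m.+1) x + evalZ (fpoly m) x.
Proof. exact: evalZ_rec. Qed.

Lemma evalZ_gpolySS x m :
  evalZ (gpoly m.+2) x = x * evalZ (gpoly m.+1) x + evalZ (gpoly m) x.
Proof. exact: evalZ_rec. Qed.

Lemma FLseq_evalZ k a b m :
  FLseq k a b m = b * evalZ (gpoly m) k + a * evalZ (fpoly m) k.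
Proof.
suff [] : FLseq k a b m = b * evalZ (gpoly m) k + a * evalZ (fpoly m) k /\
          FLseq k a b m.+1 = b * evalZ (gpoly m.+1) k + a * evalZ (fpoly m.+1) k by [].
elim: m => [|m [IHm IHm1]].
  by rewrite evalZ_fpoly0 evalZ_fpoly1 evalZ_gpoly0 evalZ_gpoly1 /FLseq /=; split; ring.
by split; rewrite // FLseqSS IHm IHm1 evalZ_fpolySS evalZ_gpolySS; ring.
Qed.

Lemma evalZ_gpoly_fpoly x m :
  evalZ (gpoly m) x = 2 * evalZ (fpoly m.+1) x - x * evalZ (fpoly m) x.
Proof.
suff [] : evalZ (gpoly m) x = 2 * evalZ (fpoly m.+1) x - x * evalZ (fpoly m) x /\
  evalZ (gpoly m.+1) x = 2 * evalZ (fpoly m.+2) x - x * evalZ (fpoly m.+1) x by [].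
elim: m => [|m [IHm IHm1]].
  by rewrite evalZ_fpolySS evalZ_fpoly0 evalZ_gpoly0 evalZ_fpoly1 evalZ_gpoly1; split; ring.
by split; rewrite // evalZ_gpolySS IHm IHm1 !evalZ_fpolySS; ring.
Qed.

Lemma evalZ_fg_cassini x m :
  evalZ (gpoly m) x * evalZ (fpoly m.+1) x - evalZ (gpoly m.+1) x * evalZ (fpoly m) x
  = 2 * (-1) ^+ m.
Proof.
elim: m => [|m IHm].
  by rewrite evalZ_fpoly0 evalZ_gpoly0 evalZ_fpoly1 evalZ_gpoly1 expr0; ring.
by rewrite evalZ_fpolySS evalZ_gpolySS exprS mulrCA -IHm; ring.
Qed.

Lemma evalZ_fpoly_at0 m : evalZ (fpoly m) (0 : R) = (odd m)%:R.
Proof.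
suff [] : evalZ (fpoly m) (0 : R) = (odd m)%:R /\
          evalZ (fpoly m.+1) (0 : R) = (odd m.+1)%:R by [].
elim: m => [|m [IHm IHm1]]; first by rewrite evalZ_fpoly0 evalZ_fpoly1.
by split; rewrite // evalZ_fpolySS IHm mul0r add0r /= negbK.
Qed.

End FLpolynomials.

Lemma evalZ_gpoly_at1_ge1 (R : realDomainType) m : 1 <= evalZ (gpoly m) (1 : R).
Proof.
suff [] : 1 <= evalZ (gpoly m) (1 : R) /\ 1 <= evalZ (gpoly m.+1) (1 : R) by [].
elim: m => [|m [IHm IHm1]].
  by rewrite evalZ_gpoly0 evalZ_gpoly1 lexx ler1n.
split; rewrite // evalZ_gpolySS mul1r; apply: le_trans IHm1 _.
by rewrite lerDl; apply: le_trans IHm; exact: ler01.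
Qed.

Lemma roots_finite (R : idomainType) (q : {poly R}) :
  q != 0 -> exists s : seq R, forall x, root q x -> x \in s.
Proof.
elim: {q}(size q) {-2}q (leqnn (size q)) => [|n IHn] q sizeq q0.
  by move: q0; rewrite -size_poly_eq0; lia.
have [[x qx] | no_root] := classic (exists x, root q x); last first.
  by exists [::] => y qy; case: no_root; exists y.
case/factor_theorem: qx => r qE.
have r0 : r != 0 by apply: contraNneq q0 => r0; rewrite qE r0 mul0r.
have sizer : (size r <= n)%N.
  by move: sizeq; rewrite qE size_Mmonic ?monicXsubC // size_XsubC addn2.
have [s rs] := IHn r sizer r0; exists (x :: s) => y.
by rewrite qE rootM root_XsubC in_cons => /orP [/rs ->|->]; rewrite ?orbT.
Qed.

Lemma inA_0 (R : comNzRingType) n : odd n -> inA n (0 : R).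
Proof.
move=> oddn; rewrite /inA /Fpoly evalZ_sub !evalZ_fpoly_at0 /= oddn.
by rewrite sub0r addNr eqxx.
Qed.

Lemma FLseq_boundary_diff (R : comNzRingType) (k a b : R) n :
  FLseq k a b 1 + FLseq k a b n.+1 - (FLseq k a b 0 + FLseq k a b n) =
  a * (evalZ (Fpoly n) k + 1) + b * (evalZ (Gpoly n) k + k - 2).
Proof.
rewrite /Fpoly /Gpoly !evalZ_sub !FLseq_evalZ.
by rewrite evalZ_fpoly0 evalZ_fpoly1 evalZ_gpoly0 evalZ_gpoly1; ring.
Qed.

Lemma FLseq_boundary_eq0 (R : numFieldType) (k a b : R) n :
  odd n -> evalZ (gpoly n) k != 0 ->
  FLseq k a b 1 + FLseq k a b n.+1 = 0 -> FLseq k a b 0 + FLseq k a b n = 0 ->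
  a = 0 /\ b = 0.
Proof.
move=> oddn g0.
have cassini := evalZ_fg_cassini k n; rewrite -signr_odd oddn expr1 in cassini.
have gE := evalZ_gpoly_fpoly k n.
move: g0 cassini gE; rewrite !FLseq_evalZ evalZ_fpoly0 evalZ_fpoly1 evalZ_gpoly0 evalZ_gpoly1.
rewrite mulr1 mulr0 addr0.
set gN := evalZ (gpoly n) k; set gN1 := evalZ (gpoly n.+1) k.
set fN := evalZ (fpoly n) k; set fN1 := evalZ (fpoly n.+1) k => g0 cassini gE c0 d0.
pose D := (2 + gN) * (1 + fN1) - fN * (k + gN1).
have D0 : D != 0.
  have -> : D = 2 * gN.
    transitivity (2 + (2 * fN1 - k * fN) + gN + (gN * fN1 - gN1 * fN)); first by rewrite /D; ring.
    by rewrite cassini -gE; ring.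
  by rewrite mulf_neq0 // pnatr_eq0.
have aD : D * a = (2 + gN) * (b * k + a + (b * gN1 + a * fN1)) -
                  (k + gN1) * (b * 2 + (b * gN + a * fN)) by rewrite /D; ring.
have bD : D * b = (1 + fN1) * (b * 2 + (b * gN + a * fN)) -
                  fN * (b * k + a + (b * gN1 + a * fN1)) by rewrite /D; ring.
rewrite c0 d0 !mulr0 subrr in aD bD.
by split; apply: (mulfI D0); rewrite mulr0.
Qed.

Lemma singular_point_on_line (R : numFieldType) (X Y a b : R) : X != 0 -> Y != 0 ->
  [/\ a * X + b * Y = 0, 4 * a ^+ 3 + 27 * b ^+ 2 = 0 & ~ (a = 0 /\ b = 0)] <->
  a = - (27 * X ^+ 2) / (4 * Y ^+ 2) /\ b = 27 * X ^+ 3 / (4 * Y ^+ 3).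
Proof.
move=> X0 Y0; have n4 : (4 : R) != 0 by rewrite pnatr_eq0.
have n27 : (27 : R) != 0 by rewrite pnatr_eq0.
split=> [[line sing nz] | [-> ->]]; last first.
  have aT0 : - (27 * X ^+ 2) / (4 * Y ^+ 2) != 0.
    by rewrite mulf_neq0 ?invr_neq0 ?oppr_eq0 ?mulf_neq0 ?expf_neq0.
  by split; [field | field | case=> aT0E; rewrite aT0E eqxx in aT0].
have bE : b = - a * X / Y.
  by apply: (mulIf Y0); apply/eqP; rewrite divfK // mulNr -addr_eq0 addrC line.
have a0 : a != 0 by apply/eqP => a0; apply: nz; rewrite bE a0 oppr0 !mul0r.
have : a ^+ 2 * (4 * a * Y ^+ 2 + 27 * X ^+ 2) = 0.
  by rewrite -[RHS](mul0r (Y ^+ 2)) -sing bE; field.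
move/eqP; rewrite mulf_eq0 expf_eq0 (negbTE a0) /= => /eqP aE.
have aE' : a = - (27 * X ^+ 2) / (4 * Y ^+ 2).
  apply: (mulIf (mulf_neq0 n4 (expf_neq0 2 Y0))); rewrite divfK ?mulf_neq0 ?expf_neq0 //.
  by apply/eqP; rewrite -subr_eq0 opprK -aE; apply/eqP; ring.
by split=> //; rewrite bE aE'; field.
Qed.

Section SingularFLpairs.
Variables (R : realFieldType) (p : nat).
Hypotheses (p_gt0 : (0 < p)%N) (evenp : ~~ odd p).
Local Notation n := p.+1.

Lemma inS_pred_type1 (k a b : R) :
  inS n p k a b <-> exists2 k', ~~ inA n k' & (k, a, b) = (k', aT1 n k', bT1 n k').
Proof.
have inA0 : inA n (0 : R) by apply: inA_0; rewrite /= evenp.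
have rank_line (k' a' b' : R) : k' != 0 ->
    (\rank (FLmx n k' a' b') <= p)%N =
    (a' * (evalZ (Fpoly n) k' + 1) + b' * (evalZ (Gpoly n) k' + k' - 2) == 0).
  by move=> k0; rewrite FLmx_rank_le_pred // -FLseq_boundary_diff subr_eq0.
split=> [[nA k0 rk sing nz] | [k' nA [-> -> ->]]].
  exists k => //; move: nA rk; rewrite rank_line // /inA negb_or => /andP [X0 Y0] /eqP line.
  by have [-> ->] := (singular_point_on_line a b X0 Y0).1 (And3 line sing nz).
have k0 : k' != 0 by apply: contraNneq nA => ->.
move: (nA); rewrite /inA negb_or => /andP [X0 Y0].
have [line sing nz] := (singular_point_on_line (aT1 n k') (bT1 n k') X0 Y0).2 (conj erefl erefl).
by split; rewrite // rank_line // line.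
Qed.

Lemma inS_rank_le_pred2_root (k a b : R) :
  inS n p k a b -> (\rank (FLmx n k a b) <= p.-1)%N -> root (map_poly intr (gpoly n)) k.
Proof.
case=> _ k0 rk _ nz rk2; apply/negPn/negP => g0; apply: nz.
move: rk; rewrite FLmx_rank_le_pred // => /eqP cd.
have c0 := FLmx_rank_le_pred2 p_gt0 cd rk2.
by apply: (FLseq_boundary_eq0 _ g0 c0); rewrite /= ?evenp // -cd.
Qed.

Lemma inS_rank_le_pred2_finite :
  exists s : seq (R * R * R), forall k a b : R,
    inS n p k a b -> (\rank (FLmx n k a b) <= p.-1)%N -> (k, a, b) \in s.
Proof.
have g0 : map_poly intr (gpoly n) != 0 :> {poly R}.
  by apply/eqP => g0; have := evalZ_gpoly_at1_ge1 R n; rewrite /evalZ g0 horner0; lra.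
have [roots rootsP] := roots_finite g0.
exists [seq (k, aT1 n k, bT1 n k) | k <- roots] => k a b kab rk2.
have [k' _ kabE] := (inS_pred_type1 k a b).1 kab.
rewrite kabE; apply: map_f; case: kabE => <- _ _.
exact/rootsP/(inS_rank_le_pred2_root kab).
Qed.

End SingularFLpairs.

Theorem theorem4p11 (R : realType) (n : nat) (Hn : (3 <= n)%N) (Hodd : odd n) :
  (* (a) *)
  (forall k a b : R, inS n n.-1 k a b <->
     exists2 k' : R, ~~ inA n k' & (k, a, b) = (k', aT1 n k', bT1 n k'))
  /\
  (* (b) : only finitely many triples of S^{n-1}_n have rank <> n-1 *)
  (exists s : seq (R * R * R), forall k a b : R,
     inS n n.-1 k a b -> \rank (FLmx n k a b) <> n.-1 -> (k, a, b) \in s)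
  /\
  (* (c) *)
  (forall r : nat, (1 <= r <= n - 2)%N ->
     exists s : seq (R * R * R), forall k a b : R,
       inS n n.-1 k a b -> \rank (FLmx n k a b) = r -> (k, a, b) \in s).
Proof.
case: n Hn Hodd => [//|p] n3 evenp.
have p_gt0 : (0 < p)%N by lia.
have [s sP] := inS_rank_le_pred2_finite R p_gt0 evenp.
split; [|split].
- exact: inS_pred_type1.
- exists s => k a b kab rk; apply: sP => //.
  by case: kab => _ _ rkp _ _; move: rkp rk; case: (\rank _); lia.
- by move=> r r_range; exists s => k a b kab rk; apply: sP; rewrite ?rk //; lia.
Qed.
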